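(* Consider the system $\dot{x} = f(x) + F(x)\theta + g(x)u$ with state $x\in\mathbb{R}^n$, input $u\in\mathbb{R}^m$ and constant unknown parameter vector $\theta\in\mathbb{R}^p$, where $f:\mathbb{R}^n\to\mathbb{R}^n$, $F:\mathbb{R}^n\to\mathbb{R}^{n\times p}$, $g:\mathbb{R}^n\to\mathbb{R}^{n\times m}$ are locally Lipschitz with $f(0)=0$ and $F(0)=0$. Let $\hat\theta\in\mathbb{R}^p$ be a parameter estimate, $\tilde\theta := \theta-\hat\theta$, so that the system reads $\dot{x} = f(x) + F(x)\hat{\theta} + g(x)u + F(x)\tilde{\theta}$. Suppose the estimate evolves according to an update law $\dot{\hat\theta}=\tau(\hat\theta,t)$, with $\tau$ locally Lipschitz in its first argument and piecewise continuous in its second, and suppose there is a function $V_\theta:\mathbb{R}^p\times\mathbb{R}_{\ge0}\to\mathbb{R}_{\ge0}$, continuously differentiable in both arguments, and constants $\eta_1,\eta_2,\eta_3>0$, $T\ge 0$ such that (i) $\eta_1\|\tilde\theta\|^2\le V_\theta(\tilde\theta,t)\le\eta_2\|\tilde\theta\|^2$ for all $(\tilde\theta,t)\in\mathbb{R}^p\times\mathbb{R}_{\ge0}$; (ii) $\dot V_\theta(\tilde\theta,t)\le 0$ for all $(\tilde\theta,t)\in\mathbb{R}^p\times\mathbb{R}_{\ge0}$; (iii) $\dot V_\theta(\tilde\theta,t)\le -\eta_3\|\tilde\theta\|^2$ for all $(\tilde\theta,t)\in\mathbb{R}^p\times\mathbb{R}_{\ge T}$, where $\dot V_\theta$ denotes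 the time derivative of $V_\theta$ along the estimation error dynamics $\dot{\tilde\theta}=-\tau(\theta-\tilde\theta,t)$. Suppose $V:\mathbb{R}^n\to\mathbb{R}_{\ge0}$ is an eISS-CLF (defined in the context) with constants $c_1,c_2,c_3,\varepsilon>0$. Then any controller $u=k(x,\hat\theta)$, $k:\mathbb{R}^n\times\mathbb{R}^p\to\mathbb{R}^m$ locally Lipschitz on $(\mathbb{R}^n\setminus\{0\})\times\mathbb{R}^p$, satisfying $$L_fV(x)+L_FV(x)\hat\theta+L_gV(x)k(x,\hat\theta)\le -c_3V(x)-\tfrac{1}{\varepsilon}\|L_FV(x)\|^2\quad\text{for all }(x,\hat\theta)\in\mathbb{R}^n\times\mathbb{R}^p,$$ renders the closed-loop system $\dot{x} = f(x) + F(x)\hat{\theta} + g(x)k(x,\hat\theta) + F(x)\tilde{\theta}$ exponentially input-to-state stable (eISS) with respect to $\tilde\theta$. Furthermore, $\lim_{t\to\infty}x(t)=0$.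
   Context: $\|\cdot\|$ is the Euclidean norm; $\mathcal{L}_\infty$ denotes bounded functions with $\|d\|_\infty=\sup_{t\ge0}\|d(t)\|$. For a continuously differentiable $V$ and vector field (or matrix of vector fields) $f$, $L_fV(x)=\nabla V(x)f(x)$ with $\nabla V(x)$ a row vector. A continuously differentiable positive definite $V:\mathbb{R}^n\to\mathbb{R}_{\ge0}$ is an exponential input-to-state stable control Lyapunov function (eISS-CLF) if there exist $c_1,c_2,c_3,\varepsilon>0$ with $c_1\|x\|^2\le V(x)\le c_2\|x\|^2$ for all $x$, and $\inf_{u\in\mathbb{R}^m}\big(L_fV(x)+L_FV(x)\hat\theta+L_gV(x)u\big)< -c_3V(x)-\tfrac1\varepsilon\|L_FV(x)\|^2$ for all $(x,\hat\theta)\in(\mathbb{R}^n\setminus\{0\})\times\mathbb{R}^p$. The closed-loop system is exponentially ISS (eISS) if there are constants $c,\lambda>0$ and $\iota\in\mathcal{K}_\infty$ such that for each initial condition $x(0)$ and each $\tilde\theta(\cdot)\in\mathcal{L}_\infty$, the trajectory satisfies $\|x(t)\|\le c\|x(0)\|e^{-\lambda t}+\iota(\|\tilde\theta\|_\infty)$ for all $t\ge0$. $\mathcal{K}_\infty$: continuous, strictly increasing functions $\alpha:\mathbb{R}_{\ge0}\to\mathbb{R}_{\ge0}$ with $\alpha(0)=0$ and $\alpha(r)\to\infty$ as $r\to\infty$. *)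

From HB Require Import structures.
From mathcomp Require Import all_boot all_order all_algebra.
From mathcomp Require Import all_classical all_reals all_analysis.
Set Implicit Arguments. Unset Strict Implicit. Unset Printing Implicit Defensive.
Import Order.TTheory GRing.Theory Num.Theory.
Import numFieldNormedType.Exports.
Local Open Scope classical_set_scope.
Local Open Scope ring_scope.

Section Defs.
Variable R : realType.

Definition enorm (a b : nat) (M : 'M[R]_(a, b)) : R :=
  Num.sqrt (\sum_(i < a) \sum_(j < b) (M i j) ^+ 2).

Definition scal (M : 'M[R]_1) : R := M 0 0.

Definition C1 (U : normedModType R) (h : U -> R) : Prop :=
  (forall x, differentiable h x) /\ (forall v : U, continuous (fun x => 'd h x v)).

Definition grad (n : nat) (V : 'cV[R]_n -> R) (x : 'cV[R]_n) : 'rV[R]_n :=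
  \row_i ('d V x (delta_mx i 0 : 'cV[R]_n)).

Definition LieV (n k : nat) (V : 'cV[R]_n -> R) (h : 'cV[R]_n -> 'M[R]_(n, k))
  (x : 'cV[R]_n) : 'rV[R]_k := grad V x *m h x.

Definition loc_lipschitz_on (U W : normedModType R) (A : set U) (h : U -> W) : Prop :=
  forall x, A x -> exists2 d : R, 0 < d & exists L : R, forall y z,
    A y -> A z -> `|y - x| < d -> `|z - x| < d -> `|h y - h z| <= L * `|y - z|.

Definition pw_continuous (W : normedModType R) (h : R -> W) : Prop :=
  forall b : R, exists s : seq R,
    (forall t : R, 0 <= t <= b -> t \notin s -> {for t, continuous h}) /\
    (forall t, t \in s -> (exists l : W, h x @[x --> t^'-] --> l) /\
                          (exists l : W, h x @[x --> t^'+] --> l)).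

(* class K_infinity (functions on R>=0, extended arbitrarily to R) *)
Definition K_inf (a : R -> R) : Prop :=
  a 0 = 0 /\ {within [set r | 0 <= r], continuous a} /\
  (forall r s, 0 <= r -> r < s -> a r < a s) /\
  (forall M, exists r, 0 <= r /\ M < a r).

Definition eISS_CLF (n m p : nat) (f : 'cV[R]_n -> 'cV[R]_n)
  (F : 'cV[R]_n -> 'M[R]_(n, p)) (g : 'cV[R]_n -> 'M[R]_(n, m))
  (V : 'cV[R]_n -> R) (c1 c2 c3 eps : R) : Prop :=
  [/\ 0 < c1, 0 < c2, 0 < c3 & 0 < eps] /\
  C1 V /\ V 0 = 0 /\ (forall x, x != 0 -> 0 < V x) /\ (forall x, 0 <= V x) /\
  (forall x, c1 * enorm x ^+ 2 <= V x /\ V x <= c2 * enorm x ^+ 2) /\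
  (forall x th, x != 0 ->
     (* inf_u (...) < bound  <=>  exists u, (...) < bound *)
     exists u : 'cV[R]_m,
       scal (LieV V f x) + scal (LieV V F x *m th) + scal (LieV V g x *m u)
       < - c3 * V x - eps^-1 * enorm (LieV V F x) ^+ 2).

End Defs.

Section Defs2.
Variable R : realType.
(* time derivative of V_theta along the estimation-error dynamics
   d/dt theta_tilde = - tau(theta - theta_tilde, t):
   Vdot(z, t) = dV_theta/dt (z,t) + grad_z V_theta(z,t) . (- tau(theta - z, t)) *)
Definition Vth_dot (p : nat) (Vth : 'cV[R]_p * R -> R)
  (tau : 'cV[R]_p -> R -> 'cV[R]_p) (theta : 'cV[R]_p) (z : 'cV[R]_p) (t : R) : R :=
  'd Vth (z, t) (- tau (theta - z) t, 1).
End Defs2.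

From HB Require Import structures.
From mathcomp Require Import all_boot all_order all_algebra.
From mathcomp Require Import all_classical all_reals all_analysis.
From mathcomp Require Import ring lra.
Set Implicit Arguments. Unset Strict Implicit. Unset Printing Implicit Defensive.
Import Order.TTheory GRing.Theory Num.Theory.
Import numFieldNormedType.Exports.
Local Open Scope classical_set_scope.
Local Open Scope ring_scope.

(* Along any closed-loop solution, the controller inequality and Young's
   inequality  L_FV(x) th~ <= |L_FV(x)|^2 / eps + eps/4 |th~|^2  give
   dV/dt <= -c3 V + eps/4 |th~|^2, so by the comparison lemma
   V(x(t)) <= e^{-c3 t} V(x(0)) + eps/(4 c3) sup |th~|^2; the quadratic bounds
   on V turn this into the eISS estimate with rate c3/2 and a linear gain.
   When th~ is the estimation error, the decrease -eta3 |th~|^2 of V_theta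
   absorbs the disturbance term: U = V(x) + eps/(2 eta3) V_theta satisfies
   dU/dt <= -min(c3, eta3/(2 eta2)) U for t >= T, so U, and with it c1 |x|^2,
   decays exponentially. *)

Section Calculus.
Variable R : realType.

Lemma is_derive_comp_diff (U W : normedModType R) (y : R -> U) (h : U -> W)
    (t : R) (dy : U) :
  is_derive t 1 y dy -> differentiable h (y t) ->
  is_derive t 1 (h \o y) ('d h (y t) dy).
Proof.
move=> [/derivable1_diffP dy_t <-] dh.
apply: DeriveDef; first exact/derivable1_diffP/differentiable_comp.
rewrite deriveE; last exact: differentiable_comp.
by rewrite diff_comp // [in RHS]deriveE.
Qed.

Lemma is_derive_pair_id (U : normedModType R) (y : R -> U) (t : R) (dy : U) :
  is_derive t 1 y dy -> is_derive t 1 (fun s => (y s, s)) (dy, 1).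
Proof.
move=> [/derivable1_diffP dy_t <-].
have did : differentiable (@id R) t by case: (is_diff_id t).
have dpair := differentiable_pair dy_t did.
apply: DeriveDef; first exact/derivable1_diffP.
rewrite deriveE // (diff_pair dy_t did) /= deriveE //.
by rewrite (@diff_val _ _ _ _ _ _ _ (is_diff_id t)).
Qed.

Lemma is_derive1_continuous (U : normedModType R) (y : R -> U) (t : R) (dy : U) :
  is_derive t 1 y dy -> {for t, continuous y}.
Proof. by move=> [/derivable1_diffP/differentiable_continuous]. Qed.

Lemma is_derive_expRM (c t : R) :
  is_derive t 1 (fun s => expR (c * s)) (c * expR (c * t)).
Proof.
have dct : is_derive t 1 ( *%R c) c.
  by rewrite -[X in is_derive _ _ _ X]mulr1; exact: is_deriveZ.
by rewrite mulrC; apply: is_derive1_comp.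
Qed.

Lemma ler0_derive1_nincr_except (h : R -> R) (s : seq R) (a b : R) : a <= b ->
  {within `[a, b], continuous h} ->
  (forall t, a < t < b -> t \notin s -> derivable h t 1 /\ derive1 h t <= 0) ->
  h b <= h a.
Proof.
elim: s a b => [|x s IHs] a b ab hc hd.
  have df t : t \in `]a, b[ -> derivable h t 1 by rewrite in_itv /= => /hd[].
  have dfle t : t \in `]a, b[ -> derive1 h t <= 0 by rewrite in_itv /= => /hd[].
  by apply: (ler0_derive1_le_cc df dfle hc); rewrite ?in_itv /= ?lexx ?ab.
have in_s t : t \notin s -> t != x -> t \notin x :: s.
  by move=> ts tx; rewrite in_cons negb_or tx ts.
have [/andP[ax xb]|xab] := boolP (a < x < b); last first.
  apply: IHs => // t tab ts; apply: hd => //; apply: in_s => //.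
  by apply: contraNneq xab => <-.
have hc_sub u v : a <= u -> v <= b -> {within `[u, v], continuous h}.
  move=> au vb; apply: continuous_subspaceW hc.
  by apply: subset_itv; rewrite bnd_simp.
apply: (@le_trans _ _ (h x)).
  apply: IHs (ltW xb) (hc_sub _ _ (ltW ax) _) _ => // t /andP[xt tb] ts.
  by apply: hd; [rewrite tb (lt_trans ax xt) | rewrite in_s // gt_eqF].
apply: IHs (ltW ax) (hc_sub _ _ _ (ltW xb)) _ => // t /andP[a_t tx] ts.
by apply: hd; [rewrite a_t (lt_trans tx xb) | rewrite in_s // lt_eqF].
Qed.

Lemma gronwall_affine (w : R -> R) (s : seq R) (a b c B : R) :
  0 < c -> a <= b -> (forall t, a <= t <= b -> {for t, continuous w}) ->
  (forall t, a < t < b -> t \notin s ->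
     exists2 dw, is_derive t 1 w dw & dw <= - c * w t + B) ->
  w b <= (w a - B / c) * expR (- c * (b - a)) + B / c.
Proof.
move=> c0 ab wc wd.
pose h t := (w t - B / c) * expR (c * t).
have dh (t dw : R) : is_derive t 1 w dw ->
    is_derive t 1 h ((dw + c * w t - B) * expR (c * t)).
  move=> dwt; apply: is_derive_eq.
  by rewrite /GRing.scale /=; field; rewrite gt_eqF.
have hab : h b <= h a.
  apply: (ler0_derive1_nincr_except (s := s) ab).
    apply: continuous_in_subspaceT => t; rewrite inE /= in_itv /= => tab.
    apply: (continuousM (s := fun t => w t - B / c) (t := fun t => expR (c * t))).
      by apply: (continuousB (f := w)); [exact: wc | exact: cst_continuous].
    exact: is_derive1_continuous (is_derive_expRM c t).
  move=> t tab ts; have [dw dwt dw_le] := wd t tab ts.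
  have dht := dh t dw dwt; split; first exact: ex_derive.
  by rewrite derive1E derive_val mulr_le0_ge0 ?expR_ge0 //; lra.
have ecb : 0 < expR (c * b) := expR_gt0 _.
have expRcab : expR (- c * (b - a)) * expR (c * b) = expR (c * a).
  by rewrite -expRD; congr expR; ring.
by rewrite -(ler_pM2r ecb) mulrDl -mulrA expRcab -lerBlDr -mulrBl.
Qed.
End Calculus.

Section EuclideanNorm.
Variable R : realType.

Lemma enorm_ge0 a b (M : 'M[R]_(a, b)) : 0 <= enorm M.
Proof. exact: sqrtr_ge0. Qed.

Lemma sqr_enorm a b (M : 'M[R]_(a, b)) :
  enorm M ^+ 2 = \sum_(i < a) \sum_(j < b) M i j ^+ 2.
Proof.
rewrite sqr_sqrtr // sumr_ge0 // => i _.
by rewrite sumr_ge0 // => j _; exact: sqr_ge0.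
Qed.

Lemma normr_entry_le_enorm a b (M : 'M[R]_(a, b)) i j : `|M i j| <= enorm M.
Proof.
rewrite -sqrtr_sqr; apply: ler_wsqrtr.
rewrite (bigD1 i) //= (bigD1 j) //= -addrA lerDl.
by rewrite addr_ge0 ?sumr_ge0 // => k _; rewrite ?sumr_ge0 // => *; exact: sqr_ge0.
Qed.

Lemma mx_norm_le_enorm a b (M : 'M[R]_(a, b)) : `|M| <= enorm M.
Proof.
rewrite [`|M|]mx_normrE; elim/big_ind: _ => [|x y|ij _]; first exact: enorm_ge0.
  by rewrite ge_max => -> ->.
exact: normr_entry_le_enorm.
Qed.

Lemma scalD (A B : 'M[R]_1) : scal (A + B) = scal A + scal B.
Proof. by rewrite /scal mxE. Qed.

Lemma scal_mulmx_le_young p (u : 'rV[R]_p) (v : 'cV[R]_p) (eps : R) : 0 < eps ->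
  scal (u *m v) <= eps^-1 * enorm u ^+ 2 + eps / 4 * enorm v ^+ 2.
Proof.
move=> eps0; rewrite !sqr_enorm /scal mxE big_ord1.
have -> : \sum_(i < p) \sum_(j < 1) v i j ^+ 2 = \sum_(i < p) v i 0 ^+ 2.
  by apply: eq_bigr => i _; rewrite big_ord1.
rewrite !mulr_sumr -big_split /=; apply: ler_sum => j _.
rewrite -subr_ge0 [X in 0 <= X](_ : _ = eps^-1 * (u 0 j - eps / 2 * v j 0) ^+ 2).
  by rewrite mulr_ge0 ?sqr_ge0 ?invr_ge0 ?ltW.
by field; rewrite gt_eqF.
Qed.

Lemma diff_grad n (V : 'cV[R]_n -> R) x v : 'd V x v = scal (grad V x *m v).
Proof.
rewrite [in LHS](matrix_sum_delta v) linear_sum /scal mxE.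
apply: eq_bigr => i _; rewrite big_ord1 linearZ /= !mxE mulrC.
by rewrite [ord0]ord1.
Qed.

Lemma cvg0_of_sqr_enorm_le_expR a b (x : R -> 'M[R]_(a, b)) (A c k T : R) :
  0 < c -> 0 < k ->
  (forall t, T <= t -> c * enorm (x t) ^+ 2 <= A * expR (- k * (t - T))) ->
  x t @[t --> +oo] --> (0 : 'M[R]_(a, b)).
Proof.
move=> c0 k0 xA; apply/cvgr0Pnorm_lt => e e0.
have A1 : 0 < `|A| + 1 by rewrite ltr_wpDl.
pose d := c * e ^+ 2 / (`|A| + 1).
have d0 : 0 < d by rewrite divr_gt0 // mulr_gt0 // exprn_gt0.
near=> t.
have tT : T <= t by near: t; apply: nbhs_pinfty_ge; exact: num_real.
have Ed : expR (- k * (t - T)) < d.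
  rewrite -[d]lnK ?posrE // ltr_expR mulNr ltrNl -ltr_pdivrMl // ltrBrDl.
  by near: t; apply: nbhs_pinfty_gt; exact: num_real.
have AE : A * expR (- k * (t - T)) <= (`|A| + 1) * expR (- k * (t - T)).
  by rewrite ler_wpM2r ?expR_ge0 // (le_trans (ler_norm A)) // lerDl.
rewrite (le_lt_trans (mx_norm_le_enorm (x t))) // -ltr_sqr ?nnegrE ?enorm_ge0 ?ltW //.
rewrite -(ltr_pM2l c0); apply: le_lt_trans (xA t tT) (le_lt_trans AE _).
by rewrite -ltr_pdivlMl // [_^-1 * _]mulrC.
Unshelve. all: by end_near. Qed.
End EuclideanNorm.

Lemma le_sup_image (R : realType) (h : R -> R) (A : set R) (s : R) :
  A s -> (exists M, forall t, A t -> h t <= M) -> h s <= sup [set h t | t in A].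
Proof.
move=> As [M hM]; apply: sup_upper_bound; last by exists s.
by split; [exists (h s), s | exists M => _ [t At <-]; exact: hM].
Qed.

Lemma K_inf_scale (R : realType) (K : R) : 0 < K -> K_inf (fun r => K * r).
Proof.
move=> K0; split; first by rewrite mulr0.
split.
  apply: continuous_subspaceT => r.
  by apply: (continuousM (s := cst K) (t := id)); [exact: cst_continuous | exact: cvg_id].
split; first by move=> r s _ rs; rewrite ltr_pM2l.
move=> M; exists ((`|M| + 1) / K); split; first by rewrite divr_ge0 ?ltW ?ltr_wpDl.
by rewrite mulrC divfK ?gt_eqF // (le_lt_trans (ler_norm M)) // ltrDl.
Qed.

Lemma ler_add_of_sqr (R : realDomainType) (a b x : R) :
  0 <= a -> 0 <= b -> 0 <= x -> x ^+ 2 <= a ^+ 2 + b ^+ 2 -> x <= a + b.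
Proof.
move=> a0 b0 x0 xab; rewrite -ler_sqr ?nnegrE ?addr_ge0 //.
by apply: (le_trans xab); nra.
Qed.

Lemma composite_lyapunov_rate (R : realFieldType) (c3 eps eta2 eta3 v w z dv dw : R) :
  0 < c3 -> 0 < eps -> 0 < eta2 -> 0 < eta3 -> 0 <= v -> 0 <= w ->
  w <= eta2 * z -> dv <= - c3 * v + eps / 4 * z -> dw <= - eta3 * z ->
  dv + eps / (2 * eta3) * dw <=
    - Num.min c3 (eta3 / (2 * eta2)) * (v + eps / (2 * eta3) * w).
Proof.
move=> c30 eps0 eta20 eta30 v0 w0 wz dvz dwz.
have kap_c3 : Num.min c3 (eta3 / (2 * eta2)) <= c3 by rewrite ge_min lexx.
have kap_q : Num.min c3 (eta3 / (2 * eta2)) <= eta3 / (2 * eta2).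
  by rewrite ge_min lexx orbT.
set lam := eps / (2 * eta3); set kap := Num.min c3 _.
have lam0 : 0 < lam by rewrite divr_gt0 ?mulr_gt0.
have lam_dw : lam * dw <= - (eps / 2) * z.
  have -> : - (eps / 2) * z = lam * (- eta3 * z) by rewrite /lam; field; rewrite gt_eqF.
  by rewrite ler_wpM2l // ltW.
have kap_v : kap * v <= c3 * v by rewrite ler_wpM2r.
have kap_w : kap * (lam * w) <= eps / 4 * z.
  apply: (@le_trans _ _ (eta3 / (2 * eta2) * (lam * w))).
    by apply: ler_wpM2r kap_q; rewrite mulr_ge0 // ltW.
  have -> : eta3 / (2 * eta2) * (lam * w) = eps / (4 * eta2) * w.
    by rewrite /lam; field; rewrite !gt_eqF.
  have -> : eps / 4 * z = eps / (4 * eta2) * (eta2 * z) by field; rewrite gt_eqF.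
  by apply: ler_wpM2l wz; rewrite divr_ge0 ?mulr_ge0 ?ltW.
rewrite mulNr mulrDr; lra.
Qed.

Section ClosedLoop.
Variables (R : realType) (n m p : nat).
Variables (f : 'cV[R]_n -> 'cV[R]_n) (F : 'cV[R]_n -> 'M[R]_(n, p)).
Variables (g : 'cV[R]_n -> 'M[R]_(n, m)) (k : 'cV[R]_n -> 'cV[R]_p -> 'cV[R]_m).
Variables (V : 'cV[R]_n -> R) (c1 c2 c3 eps : R).
Hypotheses (c1_gt0 : 0 < c1) (c2_gt0 : 0 < c2) (c3_gt0 : 0 < c3) (eps_gt0 : 0 < eps).
Hypothesis V_diff : forall x, differentiable V x.
Hypothesis V_lower : forall x, c1 * enorm x ^+ 2 <= V x.
Hypothesis V_upper : forall x, V x <= c2 * enorm x ^+ 2.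
Hypothesis k_decrease : forall x th,
  scal (LieV V f x) + scal (LieV V F x *m th) + scal (LieV V g x *m k x th)
  <= - c3 * V x - eps^-1 * enorm (LieV V F x) ^+ 2.

Definition closed_loop x thh tt := f x + F x *m thh + g x *m k x thh + F x *m tt.

Lemma diff_V_closed_loop_le x thh tt :
  'd V x (closed_loop x thh tt) <= - c3 * V x + eps / 4 * enorm tt ^+ 2.
Proof.
rewrite diff_grad /closed_loop !mulmxDr !mulmxA !scalD.
have := k_decrease x thh; have := scal_mulmx_le_young (LieV V F x) tt eps_gt0.
rewrite /LieV; lra.
Qed.

Lemma is_derive_V_closed_loop (x : R -> 'cV[R]_n) thh tt (t : R) :
  is_derive t 1 x (closed_loop (x t) thh tt) ->
  exists2 dv, is_derive t 1 (V \o x) dv & dv <= - c3 * V (x t) + eps / 4 * enorm tt ^+ 2.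
Proof.
move=> dx; exists ('d V (x t) (closed_loop (x t) thh tt)).
  exact: is_derive_comp_diff.
exact: diff_V_closed_loop_le.
Qed.

Lemma closed_loop_eISS (thh tt : R -> 'cV[R]_p) (x : R -> 'cV[R]_n) (S : R) :
  (forall s : R, 0 <= s -> enorm (tt s) <= S) ->
  (forall t : R, 0 <= t -> is_derive t 1 x (closed_loop (x t) (thh t) (tt t))) ->
  forall t : R, 0 <= t ->
  enorm (x t) <= Num.sqrt (c2 / c1) * enorm (x 0) * expR (- (c3 / 2) * t)
                 + Num.sqrt (eps / (4 * c1 * c3)) * S.
Proof.
move=> ttS dx t t0.
have S0 : 0 <= S := le_trans (enorm_ge0 _) (ttS 0 (lexx 0)).
pose B := eps / 4 * S ^+ 2.
have dV (s : R) : 0 <= s ->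
    exists2 dv, is_derive s 1 (V \o x) dv & dv <= - c3 * (V \o x) s + B.
  move=> s0; have [dv dvs dv_le] := is_derive_V_closed_loop (dx s s0).
  exists dv => //; apply: le_trans dv_le _.
  by rewrite lerD2l /B ler_pM2l ?divr_gt0 // ler_sqr ?nnegrE ?enorm_ge0 ?ttS.
have Vxt : V (x t) <= (V (x 0) - B / c3) * expR (- c3 * t) + B / c3.
  rewrite -[t in expR (- c3 * t)]subr0.
  apply: (gronwall_affine (w := V \o x) (s := [::]) c3_gt0 t0).
    by move=> s /andP[s0 _]; have [dv /is_derive1_continuous] := dV s s0.
  by move=> s /andP[/ltW s0 _] _; exact: dV.
have Vxt_ge := V_lower (x t); have Vx0_le := V_upper (x 0).
have B0 : 0 <= B by rewrite mulr_ge0 ?divr_ge0 ?sqr_ge0 ?ltW.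
set E := expR (- c3 * t) in Vxt *.
have E0 : 0 < E := expR_gt0 _.
have key : c1 * enorm (x t) ^+ 2 <= c2 * enorm (x 0) ^+ 2 * E + B / c3.
  have := ler_wpM2r (ltW E0) Vx0_le; have : 0 <= B / c3 * E.
    exact: mulr_ge0 (divr_ge0 B0 (ltW c3_gt0)) (ltW E0).
  by move=> BE0 VE; rewrite mulrBl in Vxt; lra.
apply: ler_add_of_sqr; rewrite ?mulr_ge0 ?sqrtr_ge0 ?enorm_ge0 ?expR_ge0 //.
have sqrt_c : Num.sqrt (c2 / c1) ^+ 2 = c2 / c1.
  by rewrite sqr_sqrtr // divr_ge0 // ltW.
have sqrt_eps : Num.sqrt (eps / (4 * c1 * c3)) ^+ 2 = eps / (4 * c1 * c3).
  by rewrite sqr_sqrtr // divr_ge0 ?mulr_ge0 // ltW.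
have half_rate : expR (- (c3 / 2) * t) ^+ 2 = E.
  by rewrite -expRM_natr; congr expR; field.
rewrite !exprMn sqrt_c sqrt_eps half_rate -(ler_pM2l c1_gt0) (le_trans key) //.
by rewrite le_eqVlt /B; apply/orP; left; apply/eqP; field; rewrite !gt_eqF.
Qed.

Section EstimatorConvergence.
Variables (Vth : 'cV[R]_p * R -> R) (tau : 'cV[R]_p -> R -> 'cV[R]_p).
Variables (theta : 'cV[R]_p) (eta2 eta3 T : R).
Hypotheses (eta2_gt0 : 0 < eta2) (eta3_gt0 : 0 < eta3) (T_ge0 : 0 <= T).
Hypothesis Vth_diff : forall zt, differentiable Vth zt.
Hypothesis Vth_ge0 : forall z (t : R), 0 <= t -> 0 <= Vth (z, t).
Hypothesis Vth_le : forall z (t : R), 0 <= t -> Vth (z, t) <= eta2 * enorm z ^+ 2.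
Hypothesis Vth_dot_le : forall z (t : R), T <= t ->
  Vth_dot Vth tau theta z t <= - eta3 * enorm z ^+ 2.

Lemma is_derive_Vth_error (thh : R -> 'cV[R]_p) (t : R) :
  is_derive t 1 thh (tau (thh t) t) ->
  is_derive t 1 (fun s => Vth (theta - thh s, s))
    (Vth_dot Vth tau theta (theta - thh t) t).
Proof.
move=> dthh; have derr : is_derive t 1 (fun s => theta - thh s) (- tau (thh t) t).
  by rewrite -sub0r; apply: is_deriveB.
rewrite /Vth_dot subKr.
exact: is_derive_comp_diff (is_derive_pair_id derr) (Vth_diff _).
Qed.

Lemma closed_loop_cvg0 (thh : R -> 'cV[R]_p) (x : R -> 'cV[R]_n) :
  (forall t : R, 0 <= t -> {for t, continuous thh}) ->
  (forall b : R, exists s : seq R, forall t : R, 0 <= t <= b -> t \notin s ->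
     is_derive t 1 thh (tau (thh t) t)) ->
  (forall t : R, 0 <= t ->
     is_derive t 1 x (closed_loop (x t) (thh t) (theta - thh t))) ->
  x t @[t --> +oo] --> (0 : 'cV[R]_n).
Proof.
move=> thh_cont thh_der dx.
pose lam := eps / (2 * eta3); pose kap := Num.min c3 (eta3 / (2 * eta2)).
have lam_gt0 : 0 < lam by rewrite divr_gt0 ?mulr_gt0.
have kap_gt0 : 0 < kap by rewrite lt_min c3_gt0 divr_gt0 ?mulr_gt0.
pose U t := V (x t) + lam * Vth (theta - thh t, t).
have U_cont (t : R) : 0 <= t -> {for t, continuous U}.
  move=> t0; apply: (continuousD (f := V \o x)).
    by have [dv /is_derive1_continuous] := is_derive_V_closed_loop (dx t t0).
  apply: (continuousM (s := cst lam)); first exact: cst_continuous.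
  apply: (continuous_comp (f := fun r => (theta - thh r, r)) (g := Vth)).
    apply: (cvg_pair (G := nbhs (theta - thh t)) (H := nbhs t)); last exact: cvg_id.
    by apply: (continuousB (f := cst theta)); [exact: cst_continuous | exact: thh_cont].
  exact/differentiable_continuous.
have U_decay (t : R) : T <= t -> U t <= U T * expR (- kap * (t - T)).
  move=> Tt; have [s thh_s] := thh_der t.
  have := gronwall_affine (w := U) (s := s) (B := 0) kap_gt0 Tt.
  rewrite mul0r subr0 addr0; apply.
    by move=> r /andP[Tr _]; apply: U_cont (le_trans T_ge0 Tr).
  move=> r /andP[Tr rt] rs.
  have r0 : 0 <= r by rewrite (le_trans T_ge0) ?ltW.
  have [dv dvr dv_le] := is_derive_V_closed_loop (dx r r0).
  have r0t : 0 <= r <= t by rewrite r0 ltW.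
  have dW := is_derive_Vth_error (thh_s r r0t rs).
  exists (dv + lam * Vth_dot Vth tau theta (theta - thh r) r).
    exact: is_deriveD dvr (is_deriveZ lam dW).
  rewrite addr0; apply: composite_lyapunov_rate dv_le (Vth_dot_le _ (ltW Tr)) => //.
  - by rewrite (le_trans _ (V_lower _)) // mulr_ge0 ?sqr_ge0 ?ltW.
  - exact: Vth_ge0.
  - exact: Vth_le.
apply: (cvg0_of_sqr_enorm_le_expR (A := U T) c1_gt0 kap_gt0) => t Tt.
apply: le_trans (U_decay t Tt); apply: le_trans (V_lower (x t)) _.
by rewrite lerDl mulr_ge0 ?Vth_ge0 ?(le_trans T_ge0 Tt) // ltW.
Qed.
End EstimatorConvergence.
End ClosedLoop.

Theorem theorem1 (R : realType) (n m p : nat)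
  (f : 'cV[R]_n -> 'cV[R]_n) (F : 'cV[R]_n -> 'M[R]_(n, p))
  (g : 'cV[R]_n -> 'M[R]_(n, m)) (theta : 'cV[R]_p)
  (tau : 'cV[R]_p -> R -> 'cV[R]_p)
  (Vth : 'cV[R]_p * R -> R) (eta1 eta2 eta3 T : R)
  (V : 'cV[R]_n -> R) (c1 c2 c3 eps : R)
  (k : 'cV[R]_n -> 'cV[R]_p -> 'cV[R]_m) :
  (* plant *)
  loc_lipschitz_on setT f -> loc_lipschitz_on setT F -> loc_lipschitz_on setT g ->
  f 0 = 0 -> F 0 = 0 ->
  (* update law *)
  (forall t : R, 0 <= t -> loc_lipschitz_on setT (fun z => tau z t)) ->
  (forall z, pw_continuous (tau z)) ->
  (* estimator Lyapunov function *)
  C1 Vth -> (forall z (t : R), 0 <= t -> 0 <= Vth (z, t)) ->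
  0 < eta1 -> 0 < eta2 -> 0 < eta3 -> 0 <= T ->
  (forall z (t : R), 0 <= t ->
     eta1 * enorm z ^+ 2 <= Vth (z, t) /\ Vth (z, t) <= eta2 * enorm z ^+ 2) ->
  (forall z (t : R), 0 <= t -> Vth_dot Vth tau theta z t <= 0) ->
  (forall z (t : R), T <= t -> Vth_dot Vth tau theta z t <= - eta3 * enorm z ^+ 2) ->
  (* eISS-CLF and controller *)
  eISS_CLF f F g V c1 c2 c3 eps ->
  loc_lipschitz_on [set xt : 'cV[R]_n * 'cV[R]_p | xt.1 != 0]
    (fun xt => k xt.1 xt.2) ->
  (forall x th,
     scal (LieV V f x) + scal (LieV V F x *m th) + scal (LieV V g x *m k x th)
     <= - c3 * V x - eps^-1 * enorm (LieV V F x) ^+ 2) ->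
  (* conclusion 1: eISS of the closed loop w.r.t. theta_tilde *)
  (exists c lam : R, 0 < c /\ 0 < lam /\ exists iota : R -> R, K_inf iota /\
     forall (tt : R -> 'cV[R]_p) (x : R -> 'cV[R]_n),
       (exists M : R, forall t : R, 0 <= t -> enorm (tt t) <= M) ->
       (forall t : R, 0 <= t -> is_derive t 1 x
          (f (x t) + F (x t) *m (theta - tt t)
           + g (x t) *m k (x t) (theta - tt t) + F (x t) *m tt t)) ->
       forall t : R, 0 <= t ->
         enorm (x t) <= c * enorm (x 0) * expR (- lam * t)
                        + iota (sup [set enorm (tt s) | s in [set s : R | 0 <= s]]))
  /\
  (* conclusion 2: with the estimator running, x(t) -> 0 *)
  (forall (thhat : R -> 'cV[R]_p) (x : R -> 'cV[R]_n),
     (forall t : R, 0 <= t -> {for t, continuous thhat}) ->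
     (forall b : R, exists s : seq R, forall t : R, 0 <= t <= b -> t \notin s ->
        is_derive t 1 thhat (tau (thhat t) t)) ->
     (forall t : R, 0 <= t -> is_derive t 1 x
        (f (x t) + F (x t) *m thhat t
         + g (x t) *m k (x t) (thhat t) + F (x t) *m (theta - thhat t))) ->
     x t @[t --> +oo] --> (0 : 'cV[R]_n)).
Proof.
(* The estimates are proved along every given solution. *)
move=> _ _ _ _ _ _ _ [Vth_diff _] Vth_ge0 _ eta2_gt0 eta3_gt0 T_ge0 Vth_bounds _
  Vth_dot_le [[c1_gt0 c2_gt0 c3_gt0 eps_gt0] [[V_diff _] [_ [_ [_ [V_bounds _]]]]]]
  _ k_decrease.
have V_lower x := (V_bounds x).1; have V_upper x := (V_bounds x).2.
split.
  exists (Num.sqrt (c2 / c1)), (c3 / 2); split; first by rewrite sqrtr_gt0 divr_gt0.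
  split; first by rewrite divr_gt0.
  exists (fun r => Num.sqrt (eps / (4 * c1 * c3)) * r); split.
    by apply: K_inf_scale; rewrite sqrtr_gt0 !divr_gt0 ?mulr_gt0.
  move=> tt x tt_bounded dx.
  apply: (closed_loop_eISS c1_gt0 c2_gt0 c3_gt0 eps_gt0 V_diff V_lower V_upper
    k_decrease (thh := fun s => theta - tt s)) => // s s0.
  exact: (le_sup_image (h := fun s => enorm (tt s))).
move=> thh x thh_cont thh_der dx.
have Vth_le z t t0 := (Vth_bounds z t t0).2.
exact: (closed_loop_cvg0 c1_gt0 c3_gt0 eps_gt0 V_diff V_lower k_decrease
  eta2_gt0 eta3_gt0 T_ge0 Vth_diff Vth_ge0 Vth_le Vth_dot_le thh_cont thh_der dx).
Qed.
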